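(* Let $R$ be a local ring and $s\in R$ a central element. Then $A\in M_2(R;s)$ is strongly clean if and only if one of the following holds: (1) $A\in U\big(M_2(R;s)\big)$; (2) $I_2-A\in U\big(M_2(R;s)\big)$; (3) $A$ is strongly $J$-clean in $M_2(R;s)$.
   Context: All rings are associative with identity. A ring $R$ is local if $R/J(R)$ is a division ring, where $J(R)$ is the Jacobson radical; $U(T)$ is the group of units of a ring $T$. For a ring $R$ and a central element $s\in R$, $M_2(R;s)$ denotes the ring whose elements are the $2\times 2$ arrays $\left[\begin{smallmatrix} a&b\\ c&d\end{smallmatrix}\right]$ with $a,b,c,d\in R$, with componentwise addition and multiplication $\left[\begin{smallmatrix} a&b\\ c&d\end{smallmatrix}\right]\left[\begin{smallmatrix} a'&b'\\ c'&d'\end{smallmatrix}\right]=\left[\begin{smallmatrix} aa'+s^2bc'&ab'+bd'\\ ca'+dc'&s^2cb'+dd'\end{smallmatrix}\right]$, with identity $I_2$. An element $a$ of a ring $T$ is strongly clean if there is an idempotent $e\in T$ with $ae=ea$ and $a-e\in U(T)$; it is strongly $J$-clean if there is an idempotent $e\in T$ with $ae=ea$ and $a-e\in J(T)$. *)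

From HB Require Import structures.
From mathcomp Require Import all_boot all_order all_algebra.
Set Implicit Arguments. Unset Strict Implicit. Unset Printing Implicit Defensive.
Import GRing.Theory.
Local Open Scope ring_scope.

Section RingNotions.
Variable T : pzRingType.

Definition is_left_ideal (I : T -> Prop) : Prop :=
  I 0 /\ (forall x y, I x -> I y -> I (x - y)) /\ (forall r x, I x -> I (r * x)).

Definition maximal_left_ideal (I : T -> Prop) : Prop :=
  is_left_ideal I /\ ~ I 1 /\
  (forall K : T -> Prop, is_left_ideal K -> (forall x, I x -> K x) -> ~ K 1 ->
     forall x, K x -> I x).

Definition jacobson (x : T) : Prop :=
  forall I : T -> Prop, maximal_left_ideal I -> I x.

Definition is_unit (x : T) : Prop := exists y : T, x * y = 1 /\ y * x = 1.

(* T is local: T/J(T) is a division ring, i.e. the quotient is nontrivial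
   (1 is not in J(T)) and every class not in J(T) (nonzero in T/J(T)) has a
   two-sided inverse in T/J(T). *)
Definition local_ring : Prop :=
  ~ jacobson 1 /\
  forall x : T, ~ jacobson x ->
    exists y : T, jacobson (x * y - 1) /\ jacobson (y * x - 1).

Definition idempotent (e : T) : Prop := e * e = e.

Definition strongly_clean (a : T) : Prop :=
  exists e : T, idempotent e /\ a * e = e * a /\ is_unit (a - e).

Definition strongly_J_clean (a : T) : Prop :=
  exists e : T, idempotent e /\ a * e = e * a /\ jacobson (a - e).

Definition central (s : T) : Prop := forall r : T, s * r = r * s.

End RingNotions.

(* An element ((a, b), (c, d)) represents the array [[a, b], [c, d]]. *)
(* The type depends on s and on the centrality proof, so that the ring
   structure below is canonically attached to M2s R s hs. *)
Definition M2s (R : pzRingType) (s : R) (hs : central s) : Type :=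
  ((R * R) * (R * R))%type.

Section M2s.
Variables (R : pzRingType) (s : R) (hs : central s).
Local Notation M2s := (@M2s R s hs).

HB.instance Definition _ := GRing.Zmodule.on M2s.

Definition M2mk (a b c d : R) : M2s := ((a, b), (c, d)).

Definition M2one : M2s := M2mk 1 0 0 1.

Definition M2mul (A B : M2s) : M2s :=
  let: ((a, b), (c, d)) := A in
  let: ((a', b'), (c', d')) := B in
  M2mk (a * a' + s ^+ 2 * b * c') (a * b' + b * d')
       (c * a' + d * c') (s ^+ 2 * c * b' + d * d').

Lemma s2C (r : R) : s ^+ 2 * r = r * s ^+ 2.
Proof. by rewrite expr2 -mulrA hs !mulrA hs. Qed.

Lemma M2mulA : associative M2mul.
Proof.
move=> [[a b] [c d]] [[a' b'] [c' d']] [[a'' b''] [c'' d'']] /=.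
rewrite /M2mk; move: (s ^+ 2) s2C => z hz; congr ((_, _), (_, _));
rewrite !(mulrDl, mulrDr, mulrA, addrA) -!hz ?mulrA; congr (_ + _);
by rewrite addrAC.
Qed.

Lemma M2mul1r : left_id M2one M2mul.
Proof.
move=> [[a b] [c d]] /=; rewrite /M2mk.
by rewrite !mul1r !mulr0 !mul0r !addr0 !add0r.
Qed.

Lemma M2mulr1 : right_id M2one M2mul.
Proof.
move=> [[a b] [c d]] /=; rewrite /M2mk.
by rewrite !mulr1 !mulr0 !addr0 !add0r.
Qed.

Lemma M2mulDl : left_distributive M2mul +%R.
Proof.
move=> [[a b] [c d]] [[a' b'] [c' d']] [[a'' b''] [c'' d'']] /=.
rewrite /M2mk /=; congr ((_, _), (_, _));
rewrite !(mulrDl, mulrDr) -!addrA; congr (_ + _);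
rewrite [RHS]addrCA; congr (_ + _); by rewrite addrC.
Qed.

Lemma M2mulDr : right_distributive M2mul +%R.
Proof.
move=> [[a b] [c d]] [[a' b'] [c' d']] [[a'' b''] [c'' d'']] /=.
rewrite /M2mk /=; congr ((_, _), (_, _));
rewrite !(mulrDl, mulrDr) -!addrA; congr (_ + _);
rewrite [RHS]addrCA; congr (_ + _); by rewrite addrC.
Qed.

HB.instance Definition _ :=
  GRing.Zmodule_isPzRing.Build M2s M2mulA M2mul1r M2mulr1 M2mulDl M2mulDr.
End M2s.

Section M2sFacts.
Variables (R : pzRingType) (s : R) (hs : central s).

Lemma M2s_oneE : (1 : @M2s R s hs) = M2mk hs 1 0 0 1.
Proof. by []. Qed.
Lemma M2s_mulE (a b c d a' b' c' d' : R) :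
  (M2mk hs a b c d * M2mk hs a' b' c' d' : @M2s R s hs) =
  M2mk hs (a * a' + s ^+ 2 * b * c') (a * b' + b * d')
          (c * a' + d * c') (s ^+ 2 * c * b' + d * d').
Proof. by []. Qed.
End M2sFacts.

(* Over a local ring R, an idempotent e of M_2(R;s) is 0 or 1, or e or 1 - e
   is similar to E11 = diag(1,0): according to which of the diagonal entries
   a, 1 - a, d, 1 - d are units, either e or 1 - e has a Jacobson diagonal
   (and is then 0), or the matrix with the columns of e and of 1 - e is
   invertible by a Schur complement computation.  If e is not 0 or 1 and
   commutes with A, the conjugate of A commutes with E11, so it is diagonal;
   and a diagonal matrix diag(x, y) is a unit, has 1 - A a unit, or is
   strongly J-clean with idempotent diag(1,0) or diag(0,1), depending on which
   of x, 1 - x, y, 1 - y lie in J(R).  All three conditions are invariant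
   under similarity because J is a two-sided ideal.  Conversely, if a - e lies
   in J then a - (1 - e) = (2e - 1) + (a - e) is a unit, as (2e - 1)^2 = 1. *)

From Pilot Require Import Defs.
From HB Require Import structures.
From mathcomp Require Import all_boot all_order all_algebra.
From mathcomp Require classical_sets boolp.
Set Implicit Arguments.
Unset Strict Implicit.
Import GRing.Theory.
Local Open Scope ring_scope.

Section Jacobson.
Variable T : pzRingType.
Local Notation J := (@jacobson T).

Lemma is_unit1 : is_unit (1 : T).
Proof. by exists 1; rewrite mulr1. Qed.

Lemma is_unitM (x y : T) : is_unit x -> is_unit y -> is_unit (x * y).
Proof.
move=> [x' [hx1 hx2]] [y' [hy1 hy2]]; exists (y' * x'); split.
  by rewrite mulrA -(mulrA x) hy1 mulr1.
by rewrite mulrA -(mulrA y') hx2 mulr1.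
Qed.

Lemma is_unitN (x : T) : is_unit x -> is_unit (- x).
Proof. by move=> [y [h1 h2]]; exists (- y); rewrite !mulrNN. Qed.

(* Zorn's lemma, applied to the proper left ideals containing [L] together
   with the empty set, which is needed as the union of the empty chain. *)
Lemma exists_maximal_left_ideal (L : T -> Prop) :
  is_left_ideal L -> ~ L 1 ->
  exists2 M, maximal_left_ideal M & forall x, L x -> M x.
Proof.
move=> idL nL1.
pose P (X : T -> Prop) := (forall x, ~ X x) \/
  [/\ is_left_ideal X, ~ X 1 & forall x, L x -> X x].
have [M [PM Mmax]] : exists M, P M /\ forall N, classical_sets.proper M N -> ~ P N.
  apply: classical_sets.Zorn_bigcup => F FP Ftot.
  have [[X0 FX0 [x0 X0x0]]|Fempty] :=
    boolp.pselect (exists2 X, F X & exists x, X x); last first.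
    by left=> x [X FX Xx]; apply: Fempty; exists X => //; exists x.
  have idF X x : F X -> X x -> [/\ is_left_ideal X, ~ X 1 & forall y, L y -> X y].
    by move=> FX Xx; case: (FP X FX) => // /(_ x).
  have [[X00 _] _ LX0] := idF X0 x0 FX0 X0x0.
  right; split; [split; [|split] | |].
  - by exists X0.
  - move=> x y [X FX Xx] [Y FY Yy].
    have [[_ [XB _]] _ _] := idF X x FX Xx; have [[_ [YB _]] _ _] := idF Y y FY Yy.
    by case: (Ftot X Y FX FY) => sub; [exists Y => //; apply: YB (sub x Xx) Yy
                                     | exists X => //; apply: XB Xx (sub y Yy)].
  - move=> r x [X FX Xx]; have [[_ [_ XM]] _ _] := idF X x FX Xx.
    by exists X => //; apply: XM.
  - by move=> [X FX X1]; have [_ nX1 _] := idF X 1 FX X1.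
  - by move=> x Lx; exists X0 => //; apply: LX0.
have PL : P L by right.
case: PM => [M0|[idM nM1 LM]].
  have [L0 _] := idL.
  by case: (Mmax L _ PL); split=> [x /M0 //|/(_ 0 L0) /M0].
exists M => //; split=> //; split=> // K idK MK nK1 x Kx.
apply: boolp.contrapT => nMx; apply: (Mmax K); first by split=> // /(_ x Kx).
by right; split=> // y /LM /MK.
Qed.

Lemma jacobson_left_inv (x r : T) : J x -> exists y, y * (1 - r * x) = 1.
Proof.
move=> Jx; apply: boolp.contrapT => noinv.
pose L z := exists t, z = t * (1 - r * x).
have [M maxM LM] : exists2 M, maximal_left_ideal M & forall z, L z -> M z.
  apply: exists_maximal_left_ideal; last first.
    by move=> [t /esym ht]; apply: noinv; exists t.
  split; first by exists 0; rewrite mul0r.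
  split; first by move=> _ _ [t ->] [t' ->]; exists (t - t'); rewrite mulrBl.
  by move=> r' _ [t ->]; exists (r' * t); rewrite mulrA.
have [[_ [MB MM]] [nM1 _]] := maxM; apply: nM1.
have -> : (1 : T) = (1 - r * x) - (- r * x) by rewrite mulNr opprK subrK.
by apply: MB; [apply: LM; exists 1; rewrite mul1r | apply: MM; apply: Jx].
Qed.

Lemma jacobson_1BM_unit (x r : T) : J x -> is_unit (1 - r * x).
Proof.
move=> Jx; have [y hy] := jacobson_left_inv r Jx.
have [z hz] : exists z, z * y = 1.
  suff -> : y = 1 - (- (y * r)) * x by apply: jacobson_left_inv.
  by rewrite mulNr opprK -{1}hy mulrBr mulr1 mulrA subrK.
have zE : z = 1 - r * x.
  by have := congr1 (fun w => z * w) hy; rewrite /= mulrA hz mul1r mulr1.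
by exists y; split; rewrite // -zE.
Qed.

Lemma jacobson_of_1BM_unit (x : T) : (forall r, is_unit (1 - r * x)) -> J x.
Proof.
move=> unit1B I maxI; have [[I0 [IB IM]] [nI1 Imax]] := maxI.
apply: boolp.contrapT => nIx.
pose K z := exists2 i, I i & exists t, z = i + t * x.
have idK : is_left_ideal K.
  split; first by exists 0 => //; exists 0; rewrite mul0r addr0.
  split.
    move=> _ _ [i Ii [t ->]] [i' Ii' [t' ->]].
    by exists (i - i'); [apply: IB | exists (t - t'); rewrite mulrBl opprD addrACA].
  move=> r _ [i Ii [t ->]].
  by exists (r * i); [apply: IM | exists (r * t); rewrite mulrDr mulrA].
have IK z : I z -> K z by move=> Iz; exists z => //; exists 0; rewrite mul0r addr0.
have [i Ii [t ei]] : K 1.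
  apply: boolp.contrapT => nK1; apply: nIx.
  by apply: (Imax K idK IK nK1); exists 0 => //; exists 1; rewrite mul1r add0r.
have [w [_ hw]] := unit1B t; apply: nI1.
by rewrite -hw; apply: IM; rewrite ei addrK.
Qed.

Lemma jacobsonP (x : T) : J x <-> forall r, is_unit (1 - r * x).
Proof.
by split=> [Jx r|]; [apply: jacobson_1BM_unit | apply: jacobson_of_1BM_unit].
Qed.

Lemma is_unit_1BMC (a b : T) : is_unit (1 - a * b) -> is_unit (1 - b * a).
Proof.
move=> [u [hu1 hu2]]; exists (1 + b * u * a).
have eb : (1 - b * a) * b = b * (1 - a * b) by rewrite mulrBl mulrBr mul1r mulr1 mulrA.
have ea : a * (1 - b * a) = (1 - a * b) * a by rewrite mulrBl mulrBr mul1r mulr1 mulrA.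
split.
  by rewrite mulrDr mulr1 !mulrA eb -(mulrA b) hu1 mulr1 subrK.
by rewrite mulrDl mul1r -!mulrA ea (mulrA u) hu2 mul1r addrNK.
Qed.

Lemma jacobson0 : J 0.
Proof. by move=> I [[]]. Qed.

Lemma jacobsonB (x y : T) : J x -> J y -> J (x - y).
Proof.
by move=> Jx Jy I maxI; have [[_ [IB _]] _] := maxI; apply: IB; [apply: Jx | apply: Jy].
Qed.

Lemma jacobsonN (x : T) : J x -> J (- x).
Proof. by move=> Jx; rewrite -sub0r; apply: jacobsonB => //; apply: jacobson0. Qed.

Lemma jacobsonD (x y : T) : J x -> J y -> J (x + y).
Proof. by move=> Jx Jy; rewrite -[y]opprK; apply: jacobsonB => //; apply: jacobsonN. Qed.

Lemma jacobsonMl (r x : T) : J x -> J (r * x).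
Proof. by move=> Jx I maxI; have [[_ [_ IM]] _] := maxI; apply: IM; apply: Jx. Qed.

Lemma jacobsonMr (x r : T) : J x -> J (x * r).
Proof.
move=> Jx; apply/jacobsonP => t; rewrite mulrA; apply: is_unit_1BMC.
by rewrite mulrA; apply: jacobson_1BM_unit.
Qed.

Lemma is_unitBjacobson (u j : T) : is_unit u -> J j -> is_unit (u - j).
Proof.
move=> Uu Jj; have [v [uv _]] := Uu.
have -> : u - j = u * (1 - v * j) by rewrite mulrBr mulr1 mulrA uv mul1r.
by apply: is_unitM => //; apply: jacobson_1BM_unit.
Qed.

Lemma is_unit_1Bjacobson (j : T) : J j -> is_unit (1 - j).
Proof. exact/is_unitBjacobson/is_unit1. Qed.

Lemma idempotent1B (e : T) : Defs.idempotent e -> Defs.idempotent (1 - e).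
Proof.
by move=> ie; rewrite /Defs.idempotent mulrBr mulr1 mulrBl mul1r ie subrr subr0.
Qed.

Definition clean_trichotomy (a : T) :=
  [\/ is_unit a, is_unit (1 - a) | strongly_J_clean a].

Lemma strongly_J_clean_clean (a : T) : strongly_J_clean a -> strongly_clean a.
Proof.
move=> [e [ie [ae Jae]]]; exists (1 - e); split; first exact: idempotent1B.
split; first by rewrite mulrBr mulrBl mulr1 mul1r ae.
have w2 : (e + e - 1) * (e + e - 1) = 1.
  by rewrite mulrBr mulrBl !mulrDl !mulrDr ie !mul1r !mulr1 opprB addrK addrC subrK.
have -> : a - (1 - e) = (e + e - 1) - - (a - e).
  by rewrite opprK addrA addrAC (addrAC e) addrK opprB addrC.
by apply: is_unitBjacobson; [exists (e + e - 1) | apply: jacobsonN].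
Qed.

Lemma clean_trichotomy_strongly_clean (a : T) :
  clean_trichotomy a -> strongly_clean a.
Proof.
case=> [ua|ua|/strongly_J_clean_clean //].
  by exists 0; rewrite /Defs.idempotent !mul0r mulr0 subr0.
exists 1; rewrite /Defs.idempotent !mul1r mulr1 -opprB.
by split=> //; split=> //; apply: is_unitN.
Qed.

Definition similar (x y : T) :=
  exists P Q, [/\ P * Q = 1, Q * P = 1 & Q * x * P = y].

Lemma mul_conj (P Q x y : T) :
  Q * P = 1 -> (P * x * Q) * (P * y * Q) = P * (x * y) * Q.
Proof. by move=> QP; rewrite !mulrA -(mulrA (P * x)) QP mulr1. Qed.

Lemma clean_trichotomy_similar (a b : T) :
  similar a b -> clean_trichotomy b -> clean_trichotomy a.
Proof.
move=> [P [Q [PQ QP bE]]].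
have -> : a = P * b * Q by rewrite -bE !mulrA PQ mul1r -mulrA PQ mulr1.
have uP : is_unit P by exists Q.
have uQ : is_unit Q by exists P.
case=> [ub|ub|[g [ig [bg Jbg]]]].
- by apply: Or31; do 2 apply: is_unitM => //.
- apply: Or32; have -> : 1 - P * b * Q = P * (1 - b) * Q.
    by rewrite mulrBr mulr1 mulrBl PQ.
  by do 2 apply: is_unitM => //.
apply: Or33; exists (P * g * Q); split; first by rewrite /Defs.idempotent mul_conj ?ig.
split; first by rewrite !mul_conj // bg.
by rewrite -mulrBl -mulrBr; apply: jacobsonMr; apply: jacobsonMl.
Qed.

End Jacobson.

Section LocalRing.
Variable R : pzRingType.
Hypothesis localR : local_ring R.
Local Notation J := (@jacobson R).

Lemma local_unit_or_jacobson (x : R) : is_unit x \/ J x.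
Proof.
case: (boolp.pselect (J x)) => [|nJx]; first by right.
left; have [y [Jxy Jyx]] := localR.2 x nJx.
have unit_of_jacobsonB1 (z : R) : J (z - 1) -> is_unit z.
  by move=> /jacobsonN/is_unit_1Bjacobson; rewrite opprB subKr.
have [u [xyu _]] := unit_of_jacobsonB1 _ Jxy.
have [v [_ vyx]] := unit_of_jacobsonB1 _ Jyx.
exists (y * u); split; first by rewrite mulrA.
suff <- : v * y = y * u by rewrite -mulrA.
by rewrite -[v * y]mulr1 -xyu !mulrA -(mulrA v) vyx mul1r.
Qed.

Lemma local_trichotomy (x : R) :
  [\/ J x /\ is_unit (1 - x), J (1 - x) /\ is_unit x | is_unit x /\ is_unit (1 - x)].
Proof.
case: (local_unit_or_jacobson x) => [ux|Jx].
  by case: (local_unit_or_jacobson (1 - x)) => [ux'|Jx']; [apply: Or33 | apply: Or32].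
by apply: Or31; split=> //; apply: is_unit_1Bjacobson.
Qed.

End LocalRing.

Section M2.
Variables (R : pzRingType) (s : R) (hs : central s).
Local Notation M := (M2s hs).
Local Notation mk := (M2mk hs).
Local Notation diag x y := (mk x 0 0 y).
Local Notation E11 := (mk 1 0 0 0).
Local Notation J := (@jacobson R).

Ltac M2simp := rewrite ?(mulr0, mul0r, mulr1, mul1r, addr0, add0r, subr0, sub0r, oppr0).

Lemma M2E (A : M) : A = mk A.1.1 A.1.2 A.2.1 A.2.2.
Proof. by case: A => [[? ?] [? ?]]. Qed.

Lemma M2subE (a b c d a' b' c' d' : R) :
  mk a b c d - mk a' b' c' d' = mk (a - a') (b - b') (c - c') (d - d').
Proof. by []. Qed.

Lemma M2_1BE (a b c d : R) : 1 - mk a b c d = mk (1 - a) (- b) (- c) (1 - d).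
Proof. by rewrite M2s_oneE M2subE !sub0r. Qed.

Lemma is_unit_M2_lower (x : R) : is_unit (mk 1 0 x 1).
Proof.
exists (mk 1 0 (- x) 1); rewrite !M2s_mulE M2s_oneE; M2simp.
by rewrite addNr addrN.
Qed.

Lemma is_unit_M2_upper (x : R) : is_unit (mk 1 x 0 1).
Proof.
exists (mk 1 (- x) 0 1); rewrite !M2s_mulE M2s_oneE; M2simp.
by rewrite addNr addrN.
Qed.

Lemma is_unit_M2diag (x y : R) : is_unit x -> is_unit y -> is_unit (diag x y).
Proof.
move=> [x' [xx' x'x]] [y' [yy' y'y]].
by exists (diag x' y'); rewrite !M2s_mulE M2s_oneE; M2simp; rewrite xx' x'x yy' y'y.
Qed.

(* The block LDU factorisation with the Schur complement of [p]. *)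
Lemma is_unit_M2_schur (p q r t p' : R) : p * p' = 1 -> p' * p = 1 ->
  is_unit (t - s ^+ 2 * r * p' * q) -> is_unit (mk p q r t).
Proof.
move=> pp' p'p uS.
have -> : mk p q r t =
    mk 1 0 (r * p') 1 * diag p (t - s ^+ 2 * r * p' * q) * mk 1 (p' * q) 0 1.
  rewrite !M2s_mulE; M2simp.
  by rewrite mulrA pp' mul1r -mulrA p'p mulr1 mulrA addrC subrK.
apply: is_unitM; last exact: is_unit_M2_upper.
by apply: is_unitM; [exact: is_unit_M2_lower | apply: is_unit_M2diag => //; exists p'].
Qed.

Lemma is_unit_M2_jacobson_lower (p q r t : R) :
  is_unit p -> J r -> is_unit t -> is_unit (mk p q r t).
Proof.
move=> [p' [pp' p'p]] Jr ut; apply: (is_unit_M2_schur pp' p'p).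
by apply: is_unitBjacobson => //; do 2 apply: jacobsonMr; apply: jacobsonMl.
Qed.

Lemma jacobson_M2 (a b c d : R) : J a -> J b -> J c -> J d -> jacobson (mk a b c d).
Proof.
move=> Ja Jb Jc Jd; apply/jacobsonP => x; rewrite [x]M2E M2s_mulE M2_1BE.
have J2 (u v w z : R) : J w -> J z -> J (u * w + v * z).
  by move=> Jw Jz; apply: jacobsonD; apply: jacobsonMl.
apply: is_unit_M2_jacobson_lower.
- by apply: is_unit_1Bjacobson; apply: J2.
- by apply: jacobsonN; apply: J2.
- by apply: is_unit_1Bjacobson; apply: J2.
Qed.

Lemma commute_M2_E11 (X : M) : X * E11 = E11 * X -> X = diag X.1.1 X.2.2.
Proof.
by case: X => [[a b] [c d]]; rewrite !M2s_mulE; M2simp; case=> <- ->.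
Qed.

Lemma idempotent_M2E (a b c d : R) : Defs.idempotent (mk a b c d) ->
  [/\ a * a + s ^+ 2 * b * c = a, a * b + b * d = b,
      c * a + d * c = c & s ^+ 2 * c * b + d * d = d].
Proof. by rewrite /Defs.idempotent M2s_mulE; case. Qed.

Lemma idempotent_M2_jacobson_eq0 (a b c d : R) :
  Defs.idempotent (mk a b c d) -> J a -> J d -> mk a b c d = 0.
Proof.
move=> ie Ja Jd; have [_ _ e3 _] := idempotent_M2E ie.
have [w [aw _]] := is_unit_1Bjacobson Ja.
have Jc : J c.
  have dc : d * c = c * (1 - a) by rewrite mulrBr mulr1 -{2}e3 addrC addKr.
  by rewrite -[c]mulr1 -aw mulrA -dc; apply: jacobsonMr; apply: jacobsonMr.
have [v [ev _]] : is_unit (1 - mk a b c d).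
  rewrite M2_1BE; apply: is_unit_M2_jacobson_lower; first exact: is_unit_1Bjacobson.
    exact: jacobsonN.
  exact: is_unit_1Bjacobson.
by rewrite -[mk a b c d]mulr1 -ev mulrA mulrBr mulr1 ie subrr mul0r.
Qed.

(* Conjugating by the matrix whose first column is that of [e] and whose
   second column is that of [1 - e]. *)
Lemma idempotent_M2_similar_E11 (a b c d : R) : Defs.idempotent (mk a b c d) ->
  is_unit a -> is_unit (1 - d) -> similar (mk a b c d) E11.
Proof.
move=> ie [a' [aa' a'a]] [w [_ wd]]; have [e1 e2 e3 e4] := idempotent_M2E ie.
have dE : s ^+ 2 * c * a' * b = d.
  have dc : (1 - d) * c = c * a by rewrite mulrBl mul1r -{1}e3 addrK.
  move: (s ^+ 2) (s2C hs) e4 => z zC e4.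
  rewrite -[LHS]mul1r -[RHS]mul1r -wd -mulrA -[RHS]mulrA; congr (w * _).
  rewrite !mulrA -zC -(mulrA z) dc mulrA -(mulrA _ a) aa' mulr1.
  by rewrite mulrBl mul1r -{1}e4 addrK.
pose P := mk a (- b) c (1 - d).
have [Q [PQ QP]] : is_unit P.
  apply: (is_unit_M2_schur aa' a'a).
  by rewrite mulrN opprK dE subrK; exact: is_unit1.
exists P, Q; split => //.
suff eP : mk a b c d * P = P * E11 by rewrite -mulrA eP mulrA QP mul1r.
rewrite !M2s_mulE; M2simp; rewrite e1 e3.
have -> : a * - b + b * (1 - d) = 0 by rewrite mulrN mulrBr mulr1 -{2}e2 addrK addNr.
by rewrite mulrN mulrBr mulr1 -{1}e4 addrK addNr.
Qed.

Lemma strongly_J_clean_M2diag (x y i j : R) :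
  Defs.idempotent i -> Defs.idempotent j -> x * i = i * x -> y * j = j * y ->
  J (x - i) -> J (y - j) -> strongly_J_clean (diag x y).
Proof.
move=> ii jj xi yj Jxi Jyj; exists (diag i j).
split; first by rewrite /Defs.idempotent M2s_mulE; M2simp; rewrite ii jj.
split; first by rewrite !M2s_mulE; M2simp; rewrite xi yj.
by rewrite M2subE subrr; apply: jacobson_M2 => //; exact: jacobson0.
Qed.

Hypothesis localR : local_ring R.

Lemma clean_trichotomy_M2diag (x y : R) : clean_trichotomy (diag x y).
Proof.
have unitA : is_unit x -> is_unit y -> clean_trichotomy (diag x y).
  by move=> ux uy; apply: Or31; apply: is_unit_M2diag.
have unit1A : is_unit (1 - x) -> is_unit (1 - y) -> clean_trichotomy (diag x y).
  by move=> ux uy; apply: Or32; rewrite M2_1BE oppr0; apply: is_unit_M2diag.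
have idem0 : Defs.idempotent (0 : R) by rewrite /Defs.idempotent mulr0.
have idem1 : Defs.idempotent (1 : R) by rewrite /Defs.idempotent mulr1.
have J1B (z : R) : J (1 - z) -> J (z - 1).
  by move=> Jz; rewrite -opprB; apply: jacobsonN.
case: (local_trichotomy localR x) => [[Jx ux']|[Jx' ux]|[ux ux']];
case: (local_trichotomy localR y) => [[Jy uy']|[Jy' uy]|[uy uy']];
  try by [apply: unitA | apply: unit1A].
- apply: Or33; apply: (strongly_J_clean_M2diag idem0 idem1);
    by rewrite ?mulr0 ?mul0r ?mulr1 ?mul1r ?subr0 //; apply: J1B.
- apply: Or33; apply: (strongly_J_clean_M2diag idem1 idem0);
    by rewrite ?mulr0 ?mul0r ?mulr1 ?mul1r ?subr0 //; apply: J1B.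
Qed.

Lemma idempotent_M2_cases (e : M) : Defs.idempotent e ->
  exists2 f, f = e \/ f = 1 - e & f = 0 \/ similar f E11.
Proof.
move=> ie.
suff : [\/ e = 0, 1 - e = 0, similar e E11 | similar (1 - e) E11].
  by case=> ?; [exists e | exists (1 - e) | exists e | exists (1 - e)]; auto.
have ie' := idempotent1B ie; move: ie ie'.
rewrite [e]M2E M2_1BE; move: e.1.1 e.1.2 e.2.1 e.2.2 => a b c d ie ie'.
have zero := idempotent_M2_jacobson_eq0 ie.
have zero' := idempotent_M2_jacobson_eq0 ie'.
have sim := idempotent_M2_similar_E11 ie.
have sim' := idempotent_M2_similar_E11 ie'.
rewrite subKr in sim'.
case: (local_trichotomy localR a) => [[Ja ua']|[Ja' ua]|[ua ua']];
case: (local_trichotomy localR d) => [[Jd ud']|[Jd' ud]|[ud ud']];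
by [apply: Or41; apply: zero | apply: Or42; apply: zero'
   | apply: Or43; apply: sim | apply: Or44; apply: sim'].
Qed.

Lemma strongly_clean_M2_trichotomy (A : M) : strongly_clean A -> clean_trichotomy A.
Proof.
move=> [e [ie [Ae uAe]]].
have [f ef [f0|[P [Q [PQ QP fE]]]]] := idempotent_M2_cases ie.
  case: ef f0 => -> e0; first by apply: Or31; rewrite -[A]subr0 -e0.
  have e1 : e = 1 by rewrite -[e]add0r -e0 subrK.
  by apply: Or32; rewrite -opprB -e1; apply: is_unitN.
have Af : A * f = f * A.
  by case: ef => ->; rewrite ?mulrBr ?mulrBl ?mulr1 ?mul1r Ae.
apply: (@clean_trichotomy_similar _ _ (Q * A * P)); first by exists P, Q.
have : Q * A * P * E11 = E11 * (Q * A * P) by rewrite -fE !mul_conj // Af.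
by move/commute_M2_E11 ->; apply: clean_trichotomy_M2diag.
Qed.

End M2.

Unset Implicit Arguments.

Theorem theorem2p13 (R : pzRingType) (s : R) (hs : central s) :
  local_ring R ->
  forall A : M2s hs,
    strongly_clean A <->
    [\/ is_unit A, is_unit (1 - A) | strongly_J_clean A].
Proof.
move=> localR A; split; first exact: strongly_clean_M2_trichotomy.
exact: clean_trichotomy_strongly_clean.
Qed.
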